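(* Let $m\ge1$. For every $u$ in the even-parity sequence $\mathcal E^m$ and every $p$ in $\mathcal E^m$, the entry of $M_m$ in the row indexed by $u$ and the column indexed by $p$ is $H^{(u\oplus p)_1}\otimes\cdots\otimes H^{(u\oplus p)_m}$; and for every $u\in\mathcal E^m$ and every $p$ in the odd-parity sequence $\mathcal O^m$, the entry of $M'_m$ in the row indexed by $u$ and the column indexed by $p$ is $H^{(u\oplus p)_1}\otimes\cdots\otimes H^{(u\oplus p)_m}$. (Here $H^0=I$, $H^1=H$, and $(u\oplus p)_j$ is the $j$-th bit of the bitwise XOR of $u$ and $p$.) In other words, the matrix of local operations whose $(u,p)$ entry applies $H$ exactly at the positions where $u$ and the input $m$-tuple $p$ differ, with $u$ of even parity, coincides with $M_m$ when $p$ ranges over even-parity strings and with $M'_m$ when $p$ ranges over odd-parity strings.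
   Context: The matrices $M_i$, $M'_i$ (with entries formal tensor products of length $i$ of $I$ and $H$) are defined by $M_1=I$, $M'_1=H$, $M_{i+1}=\begin{pmatrix} I\otimes M_i & H\otimes M'_i\\ H\otimes M'_i & I\otimes M_i\end{pmatrix}$, $M'_{i+1}=\begin{pmatrix} I\otimes M'_i & H\otimes M_i\\ H\otimes M_i & I\otimes M'_i\end{pmatrix}$, where $A\otimes B$ tensors $A$ on the left with every entry of $B$. $H$ is the Hadamard gate and $I$ the identity. The rows of $M_m$ and $M'_m$ and the columns of $M_m$ are indexed by the $2^{m-1}$ even-parity $m$-bit strings in the order $\mathcal E^m$, and the columns of $M'_m$ by the $2^{m-1}$ odd-parity $m$-bit strings in the order $\mathcal O^m$, where these orders are defined recursively by $\mathcal E^1=(0)$, $\mathcal O^1=(1)$, $\mathcal E^{m+1}=(0e:e\in\mathcal E^m)$ followed by $(1o:o\in\mathcal O^m)$, and $\mathcal O^{m+1}=(0o:o\in\mathcal O^m)$ followed by $(1e:e\in\mathcal E^m)$ (e.g. $\mathcal E^3=(000,011,101,110)$). *)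

From mathcomp Require Import all_boot.
Set Implicit Arguments. Unset Strict Implicit. Unset Printing Implicit Defensive.

(* Bit strings: false = 0, true = 1.
   A formal tensor product of I's and H's of length i is a word : seq bool,
   false = I, true = H, head = leftmost tensor factor.
   A matrix of such words is a list of rows, each a list of entries. *)
Definition word := seq bool.
Definition mat := seq (seq word).

Definition tensl (b : bool) (A : mat) : mat := map (map (cons b)) A.

Definition block (A B C D : mat) : mat :=
  [seq r.1 ++ r.2 | r <- zip A B] ++ [seq r.1 ++ r.2 | r <- zip C D].

(* MMp n = (M_{n+1}, M'_{n+1}) *)
Fixpoint MMp (n : nat) : mat * mat :=
  match n with
  | 0 => ([:: [:: [:: false]]], [:: [:: [:: true]]])
  | n'.+1 =>
      let: (M, M') := MMp n' in
      (block (tensl false M) (tensl true M') (tensl true M') (tensl false M),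
       block (tensl false M') (tensl true M) (tensl true M) (tensl false M'))
  end.

Definition Mmat (m : nat) : mat := (MMp m.-1).1.
Definition Mpmat (m : nat) : mat := (MMp m.-1).2.

(* EO n = (E^{n+1}, O^{n+1}) *)
Fixpoint EO (n : nat) : seq word * seq word :=
  match n with
  | 0 => ([:: [:: false]], [:: [:: true]])
  | n'.+1 =>
      let: (Es, Os) := EO n' in
      ([seq false :: e | e <- Es] ++ [seq true :: o | o <- Os],
       [seq false :: o | o <- Os] ++ [seq true :: e | e <- Es])
  end.

Definition Eord (m : nat) : seq word := (EO m.-1).1.
Definition Oord (m : nat) : seq word := (EO m.-1).2.

Definition entry (A : mat) (i j : nat) : word := nth [::] (nth [::] A i) j.

(* bitwise XOR; as a word it is H^{(u+p)_1} (x) ... (x) H^{(u+p)_m} *)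
Definition xorw (u p : word) : word := [seq x.1 (+) x.2 | x <- zip u p].

From mathcomp Require Import all_boot.

(* M_m and M'_m are the tables of (u, p) |-> u (+) p with rows indexed by
   E^m and columns by E^m, resp. O^m.  Prefixing a bit a to every row string
   and a bit b to every column string of such a table prefixes a (+) b to every
   entry, and concatenating row and column sequences assembles tables into
   block matrices, so the recursions for M, M' and for E, O match.  Since the
   lower blocks of the recursion have rows indexed by O^m, the induction has
   to carry the dual description as well: M_m is also the table over
   O^m x O^m, and M'_m the table over O^m x E^m. *)

Definition table {S T : Type} (f : S -> T -> word) (X : seq S) (Y : seq T) : mat :=
  [seq [seq f x y | y <- Y] | x <- X].

Lemma block_table (S T : Type) (f : S -> T -> word) X1 X2 Y1 Y2 :
  block (table f X1 Y1) (table f X1 Y2) (table f X2 Y1) (table f X2 Y2) =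
  table f (X1 ++ X2) (Y1 ++ Y2).
Proof.
have zip_rows X : [seq r.1 ++ r.2 | r <- zip (table f X Y1) (table f X Y2)] =
                  [seq [seq f x y | y <- Y1 ++ Y2] | x <- X].
  by elim: X => //= x X ->; rewrite map_cat.
by rewrite /block !zip_rows /table map_cat.
Qed.

Lemma tensl_table a b (X Y : seq word) :
  tensl (a (+) b) (table xorw X Y) = table xorw (map (cons a) X) (map (cons b) Y).
Proof. by rewrite /tensl /table -!map_comp; apply: eq_map => x /=; rewrite -!map_comp. Qed.

Lemma entry_table_index (S T : eqType) (f : S -> T -> word) X Y x y :
  x \in X -> y \in Y -> entry (table f X Y) (index x X) (index y Y) = f x y.
Proof.
move=> Xx Yy.
by rewrite /entry (nth_map x) ?index_mem // (nth_map y) ?index_mem // !nth_index.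
Qed.

Lemma MMp_step n (X Y : seq word) :
    MMp n = (table xorw X X, table xorw X Y) ->
    MMp n = (table xorw Y Y, table xorw Y X) ->
  let X' := map (cons false) X ++ map (cons true) Y in
  let Y' := map (cons false) Y ++ map (cons true) X in
  MMp n.+1 = (table xorw X' X', table xorw X' Y').
Proof.
move=> eX eY; have [eXY eYX] : table xorw Y Y = table xorw X X /\
                                 table xorw Y X = table xorw X Y.
  by move: eY; rewrite eX => -[-> ->].
by rewrite /= eX -!block_table -!tensl_table eXY eYX.
Qed.

Lemma MMp_tables n :
  MMp n = (table xorw (EO n).1 (EO n).1, table xorw (EO n).1 (EO n).2) /\
  MMp n = (table xorw (EO n).2 (EO n).2, table xorw (EO n).2 (EO n).1).
Proof.
elim: n => [|n [eE eO]] //; rewrite [EO _]/=.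
by case: (EO n) eE eO => E O /= eE eO; split; apply: MMp_step.
Qed.

Theorem lemma1 (m : nat) : 1 <= m ->
  (forall u p, u \in Eord m -> p \in Eord m ->
     entry (Mmat m) (index u (Eord m)) (index p (Eord m)) = xorw u p) /\
  (forall u p, u \in Eord m -> p \in Oord m ->
     entry (Mpmat m) (index u (Eord m)) (index p (Oord m)) = xorw u p).
Proof.
case: m => // n _; rewrite /Mmat /Mpmat /=; have [-> _] := MMp_tables n.
by split=> u p; apply: entry_table_index.
Qed.
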